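(* Let $n\ge 6$ and let $CB_n$ be the set of chemical bicyclic graphs on $n$ vertices. Define the following subsets of $CB_n$ (in each, all $m_{i,j}$ not listed are $0$): $\beta_2$: $n_4=0,n_3=2,n_2=n-2,n_1=0$, $m_{2,3}=4$, $m_{3,3}=1$, $m_{2,2}=n-4$; $\beta_3$: $n_4=0,n_3=2,n_2=n-2,n_1=0$, $m_{2,3}=6$, $m_{2,2}=n-5$; $\beta_9$: $n_4=0,n_3=3,n_2=n-4,n_1=1$, $m_{1,2}=1$, $m_{2,3}=3$, $m_{3,3}=3$, $m_{2,2}=n-6$. Let $G_1\in\beta_2$, $G_2\in\beta_3$, $G_3\in\beta_9$, and let $G\in CB_n$ not belong to $\beta_2\cup\beta_3\cup\beta_9$. Then $SO_{red}(G_1)<SO_{red}(G_2)<SO_{red}(G_3)<SO_{red}(G)$.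
   Context: All graphs are simple and connected. A chemical graph is a graph with maximum degree at most $4$; a bicyclic graph is a connected graph with $n$ vertices and $n+1$ edges. $d_G(u)$ is the degree of $u$, $n_i$ the number of vertices of degree $i$, and $m_{i,j}$ the number of edges joining a vertex of degree $i$ to a vertex of degree $j$. The reduced Sombor index is $SO_{red}(G)=\sum_{uv\in E(G)}\sqrt{(d_G(u)-1)^2+(d_G(v)-1)^2}$. *)

From HB Require Import structures.
From mathcomp Require Import all_boot all_order all_algebra.
Set Implicit Arguments. Unset Strict Implicit. Unset Printing Implicit Defensive.
Import Order.TTheory GRing.Theory Num.Theory.

Definition simple_graph (n : nat) (e : rel 'I_n) : Prop :=
  symmetric e /\ irreflexive e.

Definition connected_graph (n : nat) (e : rel 'I_n) : Prop :=
  forall x y : 'I_n, connect e x y.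

Definition edges (n : nat) (e : rel 'I_n) : {set 'I_n * 'I_n} :=
  [set p | e p.1 p.2 && (p.1 < p.2)%N].

Definition deg (n : nat) (e : rel 'I_n) (x : 'I_n) : nat := #|[set y | e x y]|.

Definition nverts (n : nat) (e : rel 'I_n) (i : nat) : nat :=
  #|[set x | deg e x == i]|.

Definition medges (n : nat) (e : rel 'I_n) (i j : nat) : nat :=
  #|[set p in edges e | ((deg e p.1 == i) && (deg e p.2 == j))
                         || ((deg e p.1 == j) && (deg e p.2 == i))]|.

Definition chem_bicyclic (n : nat) (e : rel 'I_n) : Prop :=
  [/\ simple_graph e, connected_graph e, #|edges e| = n.+1
    & forall x, (deg e x <= 4)%N].

Local Open Scope ring_scope.
Definition SOred (R : rcfType) (n : nat) (e : rel 'I_n) : R :=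
  \sum_(p in edges e)
     Num.sqrt (((deg e p.1)%:R - 1) ^+ 2 + ((deg e p.2)%:R - 1) ^+ 2).
Local Close Scope ring_scope.

Definition other_m_zero (n : nat) (e : rel 'I_n) (l : seq (nat * nat)) : Prop :=
  forall i j : nat, (i <= j)%N -> (i, j) \notin l -> medges e i j = 0%N.

Definition beta2 (n : nat) (e : rel 'I_n) : Prop :=
  [/\ chem_bicyclic e,
      [/\ nverts e 4 = 0, nverts e 3 = 2, nverts e 2 = n - 2 & nverts e 1 = 0],
      [/\ medges e 2 3 = 4, medges e 3 3 = 1 & medges e 2 2 = n - 4]
    & other_m_zero e [:: (2,3); (3,3); (2,2)]].

Definition beta3 (n : nat) (e : rel 'I_n) : Prop :=
  [/\ chem_bicyclic e,
      [/\ nverts e 4 = 0, nverts e 3 = 2, nverts e 2 = n - 2 & nverts e 1 = 0],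
      medges e 2 3 = 6 /\ medges e 2 2 = n - 5
    & other_m_zero e [:: (2,3); (2,2)]].

Definition beta9 (n : nat) (e : rel 'I_n) : Prop :=
  [/\ chem_bicyclic e,
      [/\ nverts e 4 = 0, nverts e 3 = 3, nverts e 2 = n - 4 & nverts e 1 = 1],
      [/\ medges e 1 2 = 1, medges e 2 3 = 3, medges e 3 3 = 3 & medges e 2 2 = n - 6]
    & other_m_zero e [:: (1,2); (2,3); (3,3); (2,2)]].

(* Write w(i, j) = sqrt((i-1)^2 + (j-1)^2), so that SO_red(G) = sum_{i<=j} m_ij w(i, j).
   Since a bicyclic graph has exactly n+1 edges,
     SO_red(G) = (n+1) sqrt 2 + sum_{i<=j} m_ij (w(i, j) - sqrt 2),
   and only the second term, the excess, has to be compared.  For beta2, beta3 and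
   beta9 it equals 4 (sqrt 5 - sqrt 2) + sqrt 2 < 6 (sqrt 5 - sqrt 2) < 1 - sqrt 2 + 3 sqrt 5,
   the last being about 6.294.  For any other chemical bicyclic graph the handshake
   identities (which with n+1 edges give n_3 + 2 n_4 = n_1 + 2), connectivity (no
   (1,1)-edges) and m_ii <= C(n_i, 2) leave only degree statistics whose excess,
   bounded below edge by edge, is larger than 6.3. *)

From HB Require Import structures.
From mathcomp Require Import all_boot all_order all_algebra.
From mathcomp Require Import zify ring lra.
Import Order.TTheory GRing.Theory Num.Theory.
Set Implicit Arguments. Unset Strict Implicit. Unset Printing Implicit Defensive.

Section SimpleGraph.
Variables (n : nat) (e : rel 'I_n).
Local Notation d := (deg e).

Lemma connected_closed (P : 'I_n -> Prop) x :
  connected_graph e -> P x -> (forall z w, P z -> e z w -> P w) -> forall y, P y.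
Proof.
move=> conn Px closedP y; have /connectP [p pth ->] := conn x y.
by elim: p x Px pth => [|z p IH] x Px //= /andP [exz]; apply: IH (closedP _ _ Px exz).
Qed.

Lemma deg_gt0 x : connected_graph e -> 0 < #|edges e| -> 0 < d x.
Proof.
move=> conn /card_gt0P [[a b]]; rewrite inE /= => /andP [eab _].
rewrite card_gt0; apply/set0Pn.
have /connectP [[|z p] /= pth ax] := conn x a; first by exists b; rewrite inE -ax.
by case/andP: pth => exz _; exists z; rewrite inE.
Qed.

Lemma nvertsE k : nverts e k = \sum_x (d x == k : nat).
Proof.
by rewrite /nverts -sum1_card big_mkcond; apply: eq_bigr => x _; rewrite inE; case: eqP.
Qed.

Hypotheses (hsym : symmetric e) (hirr : irreflexive e).

Lemma sum_adj_edges (G : 'I_n -> 'I_n -> nat) :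
  \sum_x \sum_(y | e x y) G x y = \sum_(p in edges e) (G p.1 p.2 + G p.2 p.1).
Proof.
rewrite pair_big_dep /= (bigID (fun p : 'I_n * 'I_n => p.1 < p.2)) /= big_split /=.
congr (_ + _); first by apply: eq_bigl => p; rewrite inE.
rewrite (reindex_inj (h := fun p : 'I_n * 'I_n => (p.2, p.1))) /=; last first.
  by move=> [a b] [c f] /= [-> ->].
apply: eq_bigl => [[a b]] /=; rewrite inE /= hsym -leqNgt leq_eqVlt.
by case: eqVneq => [/val_inj -> | _]; rewrite ?hirr ?andbF.
Qed.

Lemma degE x : d x = \sum_(y | e x y) 1.
Proof. by rewrite /deg -sum1_card; apply: eq_bigl => y; rewrite inE. Qed.

Lemma handshake : \sum_x d x = 2 * #|edges e|.
Proof.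
under eq_bigr do rewrite degE.
by rewrite (sum_adj_edges (fun _ _ => 1)) sum_nat_const muln2 mul2n.
Qed.

Lemma exists_deg_gt2 : n < #|edges e| -> exists x, 2 < d x.
Proof.
move=> many; case: (pickP (fun x => 2 < d x)) => [x|le2]; first by exists x.
have : \sum_x d x <= \sum_(x : 'I_n) 2 by apply: leq_sum => x _; rewrite leqNgt le2.
by rewrite handshake sum_nat_const card_ord; lia.
Qed.

Lemma medges11_eq0 : connected_graph e -> n < #|edges e| -> medges e 1 1 = 0.
Proof.
move=> conn many; apply/eqP; rewrite cards_eq0; apply/eqP/setP => -[a b].
rewrite !inE /= orbb; apply/negP => /andP [/andP [eab _] /andP [/eqP da /eqP db]].
have leaf c z w : d c = 1 -> e c z -> e c w -> w = z.
  move=> /eqP /cards1P [u hu] ecz ecw.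
  have nbr y : e c y -> y = u by move=> ecy; apply/set1P; rewrite -hu inE.
  by rewrite (nbr _ ecz) (nbr _ ecw).
have ab y : y = a \/ y = b.
  apply: (connected_closed (P := fun y => y = a \/ y = b) conn (or_introl erefl)).
  move=> z w [->|->] ezw.
    by right; apply: leaf da eab ezw.
  by left; apply: leaf db _ ezw; rewrite hsym.
have [x dx] := exists_deg_gt2 many.
by case: (ab x) dx => ->; rewrite ?da ?db.
Qed.

Lemma edge_set2_inj : {in edges e &, injective (fun p => [set p.1; p.2])}.
Proof.
move=> [a b] [a' b']; rewrite !inE /= => /andP [_] + /andP [_] + eq.
have : a' \in [set a; b] by rewrite eq set21.
have : b \in [set a'; b'] by rewrite -eq set22.
have : a \in [set a'; b'] by rewrite -eq set21.
rewrite !inE -!val_eqE /= => ha hb ha' ab ab'.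
by apply/eqP; rewrite xpair_eqE -!val_eqE /=; lia.
Qed.

Lemma medges_diag_le_bin i : medges e i i <= 'C(nverts e i, 2).
Proof.
rewrite /medges; set E := [set p in edges e | _].
have injE : {in E &, injective (fun p => [set p.1; p.2])}.
  by apply: sub_in2 edge_set2_inj => p; rewrite inE => /andP [].
rewrite -cards_draws -(card_in_imset injE); apply: subset_leq_card.
apply/subsetP => _ /imsetP [[a b] + ->]; rewrite !inE /= orbb => /andP [/andP [_ ab] /andP [da db]].
rewrite cards2 -val_eqE /= (ltn_eqF ab) andbT.
by apply/subsetP => x /set2P [] ->; rewrite inE.
Qed.

Lemma mul_nverts_edges k :
  k * nverts e k = \sum_(p in edges e) ((d p.1 == k) + (d p.2 == k)).
Proof.
rewrite nvertsE big_distrr -(sum_adj_edges (fun x _ => (d x == k : nat))).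
apply: eq_bigr => x _; case: eqP => [<- | _] /=; last by rewrite muln0 big1.
by rewrite muln1 degE.
Qed.

End SimpleGraph.

Definition degree_pairs : seq (nat * nat) :=
  [:: (1, 1); (1, 2); (1, 3); (1, 4); (2, 2); (2, 3); (2, 4); (3, 3); (3, 4); (4, 4)].

Section DegreeRange.
Variables (n : nat) (e : rel 'I_n).
Local Notation d := (deg e).
Hypothesis deg_range : forall x, 0 < d x <= 4.

Lemma medgesE i j : medges e i j =
  \sum_(p in edges e) (((d p.1 == i) && (d p.2 == j)) || ((d p.1 == j) && (d p.2 == i)) : nat).
Proof.
rewrite /medges -sum1_card big_mkcond [RHS]big_mkcond; apply: eq_bigr => p _.
by rewrite inE; case: (p \in edges e) => //=; case: (_ || _).
Qed.

Lemma sum_edges_by_degrees (V : nmodType) (f : nat -> nat -> V) :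
  (forall a b, f a b = f b a) ->
  (\sum_(p in edges e) f (d p.1) (d p.2) =
     \sum_(ij <- degree_pairs) f ij.1 ij.2 *+ medges e ij.1 ij.2)%R.
Proof.
move=> fC; under [RHS]eq_bigr do rewrite medgesE -sumrMnr.
rewrite exchange_big; apply: eq_bigr => p _ /=.
rewrite /degree_pairs !big_cons big_nil /=.
(* The cases with d p.1 > d p.2 are closed by [fC]. *)
move: (deg_range p.1) (deg_range p.2); case: (d p.1) => [|[|[|[|[|a]]]]] //;
  case: (d p.2) => [|[|[|[|[|b]]]]] // _ _; rewrite /= ?mulr0n ?mulr1n ?add0r ?addr0 //.
Qed.

Lemma nverts_sum : nverts e 1 + nverts e 2 + nverts e 3 + nverts e 4 = n.
Proof.
rewrite !nvertsE -!big_split -[RHS]card_ord -sum1_card; apply: eq_bigr => x _ /=.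
by move: (deg_range x); case: (d x) => [|[|[|[|[|a]]]]].
Qed.

Lemma other_m_zero_degree_pairs (l : seq (nat * nat)) :
  all [pred ij | (ij \in l) || (medges e ij.1 ij.2 == 0)] degree_pairs -> other_m_zero e l.
Proof.
move=> /allP zero_off_l i j ij ijNl.
case: (boolP ((i, j) \in degree_pairs)) => [/zero_off_l | ijNpairs].
  by rewrite inE /= (negPf ijNl) => /eqP.
rewrite medgesE big1 // => p _; move: ij ijNpairs (deg_range p.1) (deg_range p.2).
case: orP => [[] /andP [/eqP <- /eqP <-] | //];
  by case: (d p.1) => [|[|[|[|[|a]]]]] //; case: (d p.2) => [|[|[|[|[|b]]]]].
Qed.

End DegreeRange.

(* The coefficients are 50 times the lower bounds on [so_weight R i j - so_weight R 2 2]
   of [so_excess_lower_bounds]; 315 / 50 = 6.3 exceeds the excess of beta9. *)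
Definition large_excess (n : nat) (e : rel 'I_n) : bool :=
  315 + 21 * medges e 1 2 < 29 * medges e 1 3 + 79 * medges e 1 4 + 41 * medges e 2 3
    + 87 * medges e 2 4 + 70 * medges e 3 3 + 109 * medges e 3 4 + 141 * medges e 4 4.

Section ChemicalBicyclic.
Variables (n : nat) (e : rel 'I_n).
Local Notation d := (deg e).
Hypothesis chem : chem_bicyclic e.

Lemma chem_deg_range x : 0 < d x <= 4.
Proof. by case: chem => _ conn nedges deg4; rewrite deg_gt0 ?nedges ?deg4. Qed.

Lemma medges_sum : \sum_(ij <- degree_pairs) medges e ij.1 ij.2 = n.+1.
Proof.
case: chem => _ _ <- _; rewrite -sum1_card.
rewrite (sum_edges_by_degrees chem_deg_range (f := fun _ _ => 1)) //.
by apply: eq_bigr => ij _; rewrite natn.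
Qed.

Lemma mul_nverts_medges k :
  k * nverts e k = \sum_(ij <- degree_pairs) ((ij.1 == k) + (ij.2 == k)) * medges e ij.1 ij.2.
Proof.
case: chem => -[hsym hirr] _ _ _.
rewrite mul_nverts_edges //.
rewrite (sum_edges_by_degrees chem_deg_range (f := fun a b => (a == k) + (b == k))).
  by apply: eq_bigr => ij _; rewrite -mulr_natr natn.
by move=> a b; rewrite addnC.
Qed.

Lemma chem_medges11_eq0 : medges e 1 1 = 0.
Proof. by case: chem => -[hsym hirr] conn nedges _; apply: medges11_eq0; rewrite ?nedges. Qed.

Lemma medges_cases : beta2 e \/ beta3 e \/ beta9 e \/ large_excess e.
Proof.
rewrite /large_excess; have m11 := chem_medges11_eq0.
have nv := nverts_sum chem_deg_range; have ms := medges_sum.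
have h1 := mul_nverts_medges 1; have h2 := mul_nverts_medges 2.
have h3 := mul_nverts_medges 3; have h4 := mul_nverts_medges 4.
rewrite /degree_pairs !big_cons !big_nil /= in ms h1 h2 h3 h4.
have c3 := medges_diag_le_bin e 3; have c4 := medges_diag_le_bin e 4.
have zeros := other_m_zero_degree_pairs chem_deg_range.
(* [lia] derives n_3 + 2 n_4 = n_1 + 2 from [nv], [ms] and [h1] .. [h4]. *)
have [n4_0 | n4_gt0] := posnP (nverts e 4); last first.
  do 3 right; have [n4_1 | n4_ge2] : nverts e 4 = 1 \/ 1 < nverts e 4 by lia.
    by rewrite n4_1 bin2 /= in c4; lia.
  lia.
have [n3_2 | [n3_3 | n3_ge4]] : nverts e 3 = 2 \/ nverts e 3 = 3 \/ 3 < nverts e 3 by lia.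
- rewrite n3_2 bin2 /= in c3.
  have [m33_0 | m33_1] : medges e 3 3 = 0 \/ medges e 3 3 = 1 by lia.
    right; left; split => //; [split; lia | lia | apply: zeros; rewrite /=; lia].
  left; split => //; [split; lia | split; lia | apply: zeros; rewrite /=; lia].
- rewrite n3_3 bin2 /= in c3.
  have [[m12_1 m33_3] | not_beta9] : medges e 1 2 = 1 /\ medges e 3 3 = 3 \/
      (medges e 1 3 = 1 \/ medges e 3 3 < 3) by lia.
    do 2 right; left; split => //; [split; lia | split; lia | apply: zeros; rewrite /=; lia].
  do 3 right; lia.
- do 3 right; lia.
Qed.

End ChemicalBicyclic.

Local Open Scope ring_scope.

Definition so_weight (R : rcfType) (a b : nat) : R :=
  Num.sqrt ((a%:R - 1) ^+ 2 + (b%:R - 1) ^+ 2).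

Section Weights.
Variable R : rcfType.
Local Notation w := (so_weight R).

Lemma so_weightC a b : w a b = w b a.
Proof. by rewrite /so_weight addrC. Qed.

Lemma so_weight_pendant k : w 1 k.+1 = k%:R.
Proof. by rewrite /so_weight subrr expr0n add0r -natr1 addrK sqrtr_sqr ger0_norm. Qed.

Lemma so_weight_diag k : w k.+1 k.+1 = k%:R * w 2 2.
Proof.
have sqrt2E m : w m.+1 m.+1 = m%:R * Num.sqrt 2.
  rewrite /so_weight -natr1 addrK (_ : _ + _ = m%:R ^+ 2 * 2); last by ring.
  by rewrite sqrtrM ?sqr_ge0 // sqrtr_sqr ger0_norm.
by rewrite !sqrt2E mul1r.
Qed.

Lemma sqrtr_gt (q x : R) : 0 <= q -> q ^+ 2 < x -> q < Num.sqrt x.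
Proof.
by move=> q0 lt; rewrite -[q]ger0_norm // -sqrtr_sqr ltr_sqrt // (le_lt_trans _ lt) ?sqr_ge0.
Qed.

Lemma sqrtr_lt (q x : R) : 0 <= x -> x < q ^+ 2 -> 0 <= q -> Num.sqrt x < q.
Proof. by move=> x0 lt q0; rewrite -[q]ger0_norm // -sqrtr_sqr ltr_sqrt // (le_lt_trans x0 lt). Qed.

Lemma so_weight_bounds :
  [/\ 140 / 99 < w 2 2, w 2 2 < 99 / 70, 38 / 17 < w 2 3, w 2 3 < 161 / 72 &
      79 / 25 < w 2 4 /\ 18 / 5 < w 3 4].
Proof.
rewrite /so_weight.
by split; [| | | | split]; (apply: sqrtr_gt || apply: sqrtr_lt); rewrite ?expr2 /=; lra.
Qed.

Lemma excess_beta2_lt_beta3 :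
  4 * (w 2 3 - w 2 2) + (w 3 3 - w 2 2) < 6 * (w 2 3 - w 2 2).
Proof. have [_ ? ? _ _] := so_weight_bounds; rewrite (so_weight_diag 2). lra. Qed.

Lemma excess_beta3_lt_beta9 :
  6 * (w 2 3 - w 2 2) < (w 1 2 - w 2 2) + 3 * (w 2 3 - w 2 2) + 3 * (w 3 3 - w 2 2).
Proof.
have [? _ _ ? _] := so_weight_bounds; rewrite (so_weight_diag 2) (so_weight_pendant 1). lra.
Qed.

Lemma excess_beta9_lt :
  (w 1 2 - w 2 2) + 3 * (w 2 3 - w 2 2) + 3 * (w 3 3 - w 2 2) < 315 / 50.
Proof.
have [? _ _ ? _] := so_weight_bounds; rewrite (so_weight_diag 2) (so_weight_pendant 1). lra.
Qed.

Lemma so_excess_lower_bounds :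
  [/\ - 21 / 50 <= w 1 2 - w 2 2, 29 / 50 <= w 1 3 - w 2 2, 79 / 50 <= w 1 4 - w 2 2,
      41 / 50 <= w 2 3 - w 2 2 &
  [/\ 87 / 50 <= w 2 4 - w 2 2, 70 / 50 <= w 3 3 - w 2 2, 109 / 50 <= w 3 4 - w 2 2 &
      141 / 50 <= w 4 4 - w 2 2]].
Proof.
rewrite (so_weight_pendant 1) (so_weight_pendant 2) (so_weight_pendant 3).
rewrite (so_weight_diag 2) (so_weight_diag 3).
have [w22l w22u w23l _ [w24l w34l]] := so_weight_bounds.
by split; [| | | | split]; lra.
Qed.

End Weights.

Definition SOred_excess (R : rcfType) (n : nat) (e : rel 'I_n) : R :=
  \sum_(ij <- degree_pairs) (medges e ij.1 ij.2)%:R * (so_weight R ij.1 ij.2 - so_weight R 2 2).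

Section Excess.
Variables (R : rcfType) (n : nat).
Local Notation w := (so_weight R).

Lemma SOredE (e : rel 'I_n) :
  chem_bicyclic e -> SOred R e = n.+1%:R * w 2 2 + SOred_excess R e.
Proof.
move=> chem; rewrite /SOred_excess; under eq_bigr do rewrite mulrBr.
rewrite sumrB -mulr_suml -natr_sum medges_sum // addrC subrK.
rewrite [LHS](sum_edges_by_degrees (chem_deg_range chem) (f := w)); last exact: so_weightC.
by apply: eq_bigr => ij _; rewrite mulr_natl.
Qed.

Lemma SOred_excess_beta2 (e : rel 'I_n) :
  beta2 e -> SOred_excess R e = 4 * (w 2 3 - w 2 2) + (w 3 3 - w 2 2).
Proof.
case=> _ _ [m23 m33 m22] zero_off.
by rewrite /SOred_excess /degree_pairs !big_cons big_nil /= m23 m33 m22 !zero_off //; ring.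
Qed.

Lemma SOred_excess_beta3 (e : rel 'I_n) :
  beta3 e -> SOred_excess R e = 6 * (w 2 3 - w 2 2).
Proof.
case=> _ _ [m23 m22] zero_off.
by rewrite /SOred_excess /degree_pairs !big_cons big_nil /= m23 m22 !zero_off //; ring.
Qed.

Lemma SOred_excess_beta9 (e : rel 'I_n) : beta9 e ->
  SOred_excess R e = (w 1 2 - w 2 2) + 3 * (w 2 3 - w 2 2) + 3 * (w 3 3 - w 2 2).
Proof.
case=> _ _ [m12 m23 m33 m22] zero_off.
by rewrite /SOred_excess /degree_pairs !big_cons big_nil /= m12 m23 m33 m22 !zero_off //; ring.
Qed.

Lemma SOred_excess_gt (e : rel 'I_n) :
  chem_bicyclic e -> large_excess e -> 315 / 50 < SOred_excess R e.
Proof.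
move=> chem ineq.
have {}ineq : 315 + 21 * (medges e 1 2)%:R < 29 * (medges e 1 3)%:R + 79 * (medges e 1 4)%:R
    + 41 * (medges e 2 3)%:R + 87 * (medges e 2 4)%:R + 70 * (medges e 3 3)%:R
    + 109 * (medges e 3 4)%:R + 141 * (medges e 4 4)%:R :> R.
  by rewrite -!natrM -!natrD ltr_nat.
rewrite /SOred_excess /degree_pairs !big_cons big_nil /= chem_medges11_eq0 // mul0r add0r addr0.
have [b12 b13 b14 b23 [b24 b33 b34 b44]] := so_excess_lower_bounds R.
have scale (m : nat) (c x : R) : c <= x -> m%:R * c <= m%:R * x.
  by move=> cx; rewrite ler_wpM2l.
move: (scale (medges e 1 2) _ _ b12) (scale (medges e 1 3) _ _ b13) (scale (medges e 1 4) _ _ b14)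
  (scale (medges e 2 3) _ _ b23) (scale (medges e 2 4) _ _ b24) (scale (medges e 3 3) _ _ b33)
  (scale (medges e 3 4) _ _ b34) (scale (medges e 4 4) _ _ b44) ineq.
by clear; lra.
Qed.

End Excess.

Theorem theorem3p10 (R : rcfType) (n : nat) (hn : (6 <= n)%N)
  (e1 e2 e3 e : rel 'I_n)
  (h1 : beta2 e1) (h2 : beta3 e2) (h3 : beta9 e3)
  (hG : chem_bicyclic e) (hnot : ~ (beta2 e \/ beta3 e \/ beta9 e)) :
  ((SOred R e1 < SOred R e2) && (SOred R e2 < SOred R e3)
   && (SOred R e3 < SOred R e))%R.
Proof.
have [chem1 _ _ _] := h1; have [chem2 _ _ _] := h2; have [chem3 _ _ _] := h3.
rewrite !(SOredE R) // !ltrD2l.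
rewrite (SOred_excess_beta2 R h1) (SOred_excess_beta3 R h2) (SOred_excess_beta9 R h3).
rewrite excess_beta2_lt_beta3 excess_beta3_lt_beta9 /=.
have [beta | [beta | [beta | large]]] := medges_cases hG; try by case: hnot; auto.
exact: lt_trans (excess_beta9_lt R) (SOred_excess_gt R hG large).
Qed.
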